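(* Let $\alpha>0$, $\beta>0$, $D>0$, integers $T\ge1$ and $W\ge0$, and $2D\le L_T\le DT$. Let $X=[-D/2,D/2]$ and $x_0=0$. Set $\Delta=\lceil T/\lfloor L_T/D\rfloor\rceil$ and $K=\lceil T/\Delta\rceil$. Let $\theta_{k\Delta+1}$, $k=0,\dots,K-1$, be i.i.d. with $\mathbb P(\theta=D/2)=\mathbb P(\theta=-D/2)=1/2$, and let $\theta_t=\theta_{k\Delta+1}$ for $k\Delta+2\le t\le\min(k\Delta+\Delta,T)$. Let $f_t(x)=\frac\alpha2(x-\theta_t)^2$, and let $x^*=\arg\min_{x\in X^T}\sum_{t=1}^T\big(f_t(x_t)+\frac\beta2(x_t-x_{t-1})^2\big)$. Let $J=\{1\le t\le T-W:\ t+W\equiv1\pmod\Delta\}$. Then for any online deterministic algorithm $\mathcal A$ with prediction window $W$, $$\mathbb E|x_t^{\mathcal A}-x_t^*|^2\ge\frac{a_{t,t+W}^2D^2}{4}\qquad\text{for all }t\in J,$$ where $a_{t,s}$ denotes the $(t,s)$ entry of $A=H^{-1}$.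
   Context: Online deterministic algorithm with prediction window $W$: $x_t^{\mathcal A}=\mathcal A_t(I_t)$, where $\mathcal A_t$ is a deterministic map and $I_t$ consists of fixed initial knowledge together with $f_1,\dots,f_{\min(t+W-1,T)}$. Thus $x_t^{\mathcal A}$ is a deterministic function of $\theta_1,\dots,\theta_{\min(t+W-1,T)}$. $H\in\mathbb R^{T\times T}$ is the symmetric tridiagonal matrix with diagonal entries $1+2\beta/\alpha$ (except the last, which is $1+\beta/\alpha$) and off-diagonal entries $-\beta/\alpha$. It is invertible, and $x^*=H^{-1}\theta$. *)

From mathcomp Require Import all_boot all_order all_algebra archimedean.
From mathcomp Require Import reals.
Set Implicit Arguments. Unset Strict Implicit. Unset Printing Implicit Defensive.
Import Order.TTheory GRing.Theory Num.Theory.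
Local Open Scope ring_scope.

Section Defs.
Variable R : realType.

Definition Delta (D L : R) (T : nat) : nat :=
  `| Num.ceil ((T%:R : R) / (`| Num.floor (L / D) |%N)%:R) |%N.

Definition Kblocks (D L : R) (T : nat) : nat :=
  `| Num.ceil ((T%:R : R) / (Delta D L T)%:R) |%N.

(* theta_t (times t = 1..T), determined by a sign vector s of length K:
   theta_t = theta_{k Delta + 1} for k = (t-1) / Delta, equal to D/2 if the
   k-th sign is true, -D/2 otherwise. *)
Definition theta (D : R) (Dl : nat) (K : nat) (s : K.-tuple bool) (t : nat) : R :=
  if nth false s ((t.-1) %/ Dl) then D / 2 else - (D / 2).

(* Expectation over i.i.d. uniform signs (uniform distribution on K.-tuples) *)
Definition Esign (K : nat) (g : K.-tuple bool -> R) : R :=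
  (2 ^+ K)^-1 * \sum_(s : K.-tuple bool) g s.

Definition feasible (D : R) (T : nat) (x : nat -> R) : Prop :=
  forall t, (1 <= t <= T)%N -> - (D / 2) <= x t <= D / 2.

Definition cost (alpha beta : R) (T : nat) (th x : nat -> R) : R :=
  \sum_(1 <= t < T.+1)
     (alpha / 2 * (x t - th t) ^+ 2
      + beta / 2 * (x t - (if t == 1%N then 0 else x t.-1)) ^+ 2).

(* the tridiagonal matrix H (0-based indices i <-> time i+1) *)
Definition Hmat (alpha beta : R) (T : nat) : 'M[R]_T :=
  \matrix_(i < T, j < T)
    if i == j then (if (i : nat) == T.-1 then 1 + beta / alpha
                    else 1 + 2 * beta / alpha)
    else if ((i : nat) == j.+1) || ((j : nat) == i.+1) then - (beta / alpha)
    else 0.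

(* a_{t,s}: the (t,s) entry (1-based) of A = H^{-1} *)
Definition aent (alpha beta : R) (T : nat) (t s : nat) : R :=
  match @insub _ (fun k => k < T)%N _ t.-1, @insub _ (fun k => k < T)%N _ s.-1 with
  | Some i, Some j => invmx (Hmat alpha beta T) i j
  | _, _ => 0
  end.

Definition online (W T : nat) (Alg : nat -> (nat -> R) -> R) : Prop :=
  forall t (th1 th2 : nat -> R),
    (forall u, (1 <= u <= minn (t + W).-1 T)%N -> th1 u = th2 u) ->
    Alg t th1 = Alg t th2.

End Defs.

(* The objective is a strictly convex quadratic whose stationarity condition,
   divided by alpha, reads H x = theta.  H is strictly diagonally dominant with
   nonpositive off-diagonal entries, so it obeys a discrete maximum principle:
   H^-1 is entrywise nonnegative and maps the box [-D/2, D/2]^T into itself.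
   Hence x* = H^-1 theta.  For t in J, time t + W opens a block k, so x_t^A does
   not see the sign of block k, while flipping that sign moves x*_t by
   D (H^-1 1_k)_t >= D a_{t,t+W}, where 1_k is the indicator of block k.  A point
   has total squared distance at least v^2/2 to two points at distance v, and
   averaging over the pairs {s, flip s} gives the bound. *)

From mathcomp Require Import all_boot all_order all_algebra archimedean.
From mathcomp Require Import reals.
From mathcomp Require Import ring lra zify.
Import Order.TTheory GRing.Theory Num.Theory.
Local Open Scope ring_scope.

Section Tridiagonal.
Set Implicit Arguments. Unset Strict Implicit. Unset Printing Implicit Defensive.
Variable R : realType.

Definition fun_of_ord (T : nat) (f : 'I_T -> R) (t : nat) : R :=
  if @insub _ (fun k => k < T)%N 'I_T t.-1 is Some i then f i else 0.

Lemma fun_of_ordS T (f : 'I_T -> R) (i : 'I_T) : fun_of_ord f i.+1 = f i.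
Proof. by rewrite /fun_of_ord /= valK. Qed.

Lemma forall_ordS T (P : nat -> Prop) :
  (forall j : 'I_T, P j.+1) -> forall t, (1 <= t <= T)%N -> P t.
Proof.
move=> H t ht; have ht' : (t.-1 < T)%N by lia.
by have := H (Ordinal ht'); rewrite /= prednK //; lia.
Qed.

Definition Hseq (r : R) (T : nat) (x : nat -> R) (t : nat) : R :=
  x t + r * (x t - (if t == 1%N then 0 else x t.-1))
  + (if (t < T)%N then r * (x t - x t.+1) else 0).

Lemma HseqN r T (x : nat -> R) t : Hseq r T (fun u => - x u) t = - Hseq r T x t.
Proof. by rewrite /Hseq; case: (t == 1%N); case: (t < T)%N; ring. Qed.

Lemma Hmat_entry (alpha beta : R) T (j i : 'I_T) :
  Hmat alpha beta T j i =
    (if i == j :> nat then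
       (if (j : nat) == T.-1 then 1 + beta / alpha else 1 + 2 * beta / alpha)
     else 0)
    - (if i.+1 == j then beta / alpha else 0)
    - (if i == j.+1 :> nat then beta / alpha else 0).
Proof.
rewrite mxE -[j == i]/(j == i :> nat) [(j : nat) == i.+1]eq_sym.
case: (eqVneq (i : nat) j) => [->|_].
  by rewrite (gtn_eqF (ltnSn j)) (ltn_eqF (ltnSn j)); ring.
case: (eqVneq i.+1 j) => [<-|_]; last by case: eqP => _; ring.
by rewrite (ltn_eqF (ltnW (ltnSn i.+1))); ring.
Qed.

Lemma Hmat_row_sum (alpha beta : R) T (j : 'I_T) (x : nat -> R) :
  \sum_(i < T) Hmat alpha beta T j i * x i.+1 = Hseq (beta / alpha) T x j.+1.
Proof.
have sum1 k (F : nat -> R) :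
    \sum_(i < T) (if i == k :> nat then F i else 0) = if (k < T)%N then F k else 0.
  by rewrite -big_mkcond big_ord1_eq.
have sum_prev : \sum_(i < T) (if i.+1 == j then beta / alpha * x i.+1 else 0)
                = if j == 0%N :> nat then 0 else beta / alpha * x j.
  case: j => [[|j'] hj] /=; first by rewrite big1.
  under eq_bigr do rewrite eqSS.
  by rewrite (sum1 j' (fun n => beta / alpha * x n.+1)) ltnW.
under eq_bigr => i _ do rewrite Hmat_entry !mulrBl
  !(fun_if (fun v => v * x i.+1) (i == _ :> nat))
  (fun_if (fun v => v * x i.+1) (i.+1 == j)) !mul0r.
rewrite !sumrB sum_prev (sum1 j (fun n => _ * x n.+1)) ltn_ord.
rewrite (sum1 j.+1 (fun n => _ * x n.+1)).
have hjT := ltn_ord j.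
rewrite /Hseq eqSS; case: ltnP => hj.
  by rewrite ifF; [case: eqP => _; ring | apply/negbTE; lia].
by rewrite ifT; [case: eqP => _; ring | apply/eqP; lia].
Qed.

(* At a maximiser m of x both difference terms of Hseq x m are nonnegative,
   so x m <= Hseq x m. *)
Lemma Hseq_max_principle r T (x : nat -> R) c : 0 <= r -> 0 <= c ->
  (forall t, (1 <= t <= T)%N -> Hseq r T x t <= c) ->
  forall t, (1 <= t <= T)%N -> x t <= c.
Proof.
move=> r_ge0 c_ge0 Hx.
case: T Hx => [|n] Hx t ht; first by lia.
case: (@arg_maxP _ _ _ ord0 xpredT (fun i : 'I_n.+1 => x i.+1) isT) => m _ max_m.
have le_xm k : (k < n.+1)%N -> x k.+1 <= x m.+1.
  by move=> hk; have := max_m (inord k) isT; rewrite inordK.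
have -> : t = (t.-1).+1 by lia.
apply: le_trans (le_xm _ _) _; first by lia.
have [xm_le0|xm_gt0] := lerP (x m.+1) 0; first exact: le_trans xm_le0 c_ge0.
apply: le_trans (Hx m.+1 _); last by rewrite ltn0Sn /=; apply: ltn_ord.
rewrite /Hseq eqSS -addrA lerDl; apply: addr_ge0.
  apply: mulr_ge0 => //; rewrite subr_ge0; case: eqP => [|/eqP m_neq0].
    by move=> _; apply: ltW.
  have m_gt0 : (0 < m)%N by rewrite lt0n.
  by have := le_xm m.-1; rewrite prednK //; apply; apply: ltnW.
by case: ifP => // hm; apply: mulr_ge0 => //; rewrite subr_ge0 le_xm.
Qed.

Lemma Hseq_bound r T (x : nat -> R) c : 0 <= r -> 0 <= c ->
  (forall t, (1 <= t <= T)%N -> - c <= Hseq r T x t <= c) ->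
  forall t, (1 <= t <= T)%N -> - c <= x t <= c.
Proof.
move=> r_ge0 c_ge0 Hx t ht.
have le_c := Hseq_max_principle r_ge0 c_ge0 (fun u hu => proj2 (andP (Hx u hu))).
have ge_c : - x t <= c.
  apply: (Hseq_max_principle (x := fun u => - x u) r_ge0 c_ge0) ht => u hu.
  by rewrite HseqN lerNl; case/andP: (Hx u hu).
by rewrite lerNl ge_c le_c.
Qed.

Lemma Hmat_sym (alpha beta : R) T (i j : 'I_T) : Hmat alpha beta T i j = Hmat alpha beta T j i.
Proof. by rewrite !mxE; case: (eqVneq i j) => [->|_] //; rewrite orbC. Qed.

Lemma Hmat_unit (alpha beta : R) T : 0 < alpha -> 0 < beta -> Hmat alpha beta T \in unitmx.
Proof.
move=> alpha_gt0 beta_gt0.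
have r_ge0 : 0 <= beta / alpha by rewrite divr_ge0 ?ltW.
rewrite -row_free_unit -kermx_eq0; apply/eqP/row_matrixP => i.
set u := row i _; have u_ker : u *m Hmat alpha beta T = 0.
  by rewrite /u -row_mul mulmx_ker row0.
pose x := fun_of_ord (fun k : 'I_T => u 0 k).
have Hx0 t : (1 <= t <= T)%N -> - 0 <= Hseq (beta / alpha) T x t <= 0.
  move: t; apply: forall_ordS => j; rewrite -Hmat_row_sum.
  under eq_bigr => k _ do rewrite /x fun_of_ordS Hmat_sym mulrC.
  have := congr1 (fun M : 'M_(1, T) => M 0 j) u_ker; rewrite !mxE => ->.
  by rewrite oppr0 lexx.
apply/rowP => j; rewrite row0 [RHS]mxE.
have := Hseq_bound (t := j.+1) r_ge0 (lexx 0) Hx0 (ltn_ord j).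
by rewrite /x fun_of_ordS oppr0 -eq_le eq_sym => /eqP.
Qed.

Definition Hsolve (alpha beta : R) T (th : nat -> R) : nat -> R :=
  fun_of_ord (fun i : 'I_T => \sum_(j < T) invmx (Hmat alpha beta T) i j * th j.+1).

Lemma Hseq_Hsolve (alpha beta : R) T (th : nat -> R) : 0 < alpha -> 0 < beta ->
  forall t, (1 <= t <= T)%N -> Hseq (beta / alpha) T (Hsolve alpha beta T th) t = th t.
Proof.
move=> alpha_gt0 beta_gt0; apply: forall_ordS => j; rewrite -Hmat_row_sum.
pose c : 'cV[R]_T := \col_k th k.+1.
have -> : th j.+1 = (Hmat alpha beta T *m (invmx (Hmat alpha beta T) *m c)) j 0.
  by rewrite mulmxA mulmxV ?Hmat_unit // mul1mx mxE.
rewrite [RHS]mxE; apply: eq_bigr => i _; rewrite /Hsolve fun_of_ordS.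
by congr (_ * _); rewrite mxE; apply: eq_bigr => k _; rewrite mxE.
Qed.

Lemma eq_Hsolve (alpha beta : R) T (f g : nat -> R) t :
  (forall u, (1 <= u <= T)%N -> f u = g u) ->
  Hsolve alpha beta T f t = Hsolve alpha beta T g t.
Proof.
move=> eq_fg; rewrite /Hsolve /fun_of_ord; case: insub => // i.
by apply: eq_bigr => j _; rewrite eq_fg //; have := ltn_ord j; lia.
Qed.

Lemma HsolveD (alpha beta : R) T (f g : nat -> R) c t :
  Hsolve alpha beta T (fun u => f u + c * g u) t
  = Hsolve alpha beta T f t + c * Hsolve alpha beta T g t.
Proof.
rewrite /Hsolve /fun_of_ord; case: insub => [i|]; last by ring.
by rewrite big_distrr -big_split; apply: eq_bigr => j _ /=; ring.
Qed.

Lemma Hsolve_ge0 (alpha beta : R) T (f : nat -> R) : 0 < alpha -> 0 < beta ->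
  (forall u, (1 <= u <= T)%N -> 0 <= f u) ->
  forall t, (1 <= t <= T)%N -> 0 <= Hsolve alpha beta T f t.
Proof.
move=> alpha_gt0 beta_gt0 f_ge0 t ht; rewrite -oppr_le0.
have r_ge0 : 0 <= beta / alpha by rewrite divr_ge0 ?ltW.
apply: (Hseq_max_principle (x := fun u => - Hsolve alpha beta T f u) r_ge0 (lexx 0)) ht.
move=> u hu.
by rewrite HseqN Hseq_Hsolve // oppr_le0 f_ge0.
Qed.

Lemma ler_Hsolve (alpha beta : R) T (f g : nat -> R) : 0 < alpha -> 0 < beta ->
  (forall u, (1 <= u <= T)%N -> f u <= g u) ->
  forall t, (1 <= t <= T)%N -> Hsolve alpha beta T f t <= Hsolve alpha beta T g t.
Proof.
move=> alpha_gt0 beta_gt0 le_fg t ht.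
rewrite (@eq_Hsolve _ _ _ g (fun u => f u + 1 * (g u - f u))); last by move=> u _; ring.
by rewrite HsolveD mul1r lerDl Hsolve_ge0 // => u hu; rewrite subr_ge0 le_fg.
Qed.

Lemma Hsolve_bound (alpha beta : R) T (f : nat -> R) c : 0 < alpha -> 0 < beta -> 0 <= c ->
  (forall u, (1 <= u <= T)%N -> - c <= f u <= c) ->
  forall t, (1 <= t <= T)%N -> - c <= Hsolve alpha beta T f t <= c.
Proof.
move=> alpha_gt0 beta_gt0 c_ge0 f_bound.
have r_ge0 : 0 <= beta / alpha by rewrite divr_ge0 ?ltW.
apply: (Hseq_bound r_ge0 c_ge0) => u hu.
by rewrite Hseq_Hsolve // f_bound.
Qed.

Lemma Hsolve_delta (alpha beta : R) T t s : (1 <= t <= T)%N -> (1 <= s <= T)%N ->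
  Hsolve alpha beta T (fun u => if u == s then 1 else 0) t = aent alpha beta T t s.
Proof.
move=> ht hs; have ht' : (t.-1 < T)%N by lia.
have hs' : (s.-1 < T)%N by lia.
rewrite /Hsolve /aent /fun_of_ord !insubT (bigD1 (Ordinal hs')) //= prednK; last by lia.
rewrite eqxx mulr1 big1 ?addr0 // => j ne_js.
by rewrite ifF ?mulr0 //; apply: contraNF ne_js => /eqP eq_js; apply/eqP/val_inj => /=; lia.
Qed.

Lemma aent_ge0 (alpha beta : R) T t s : 0 < alpha -> 0 < beta ->
  (1 <= t <= T)%N -> (1 <= s <= T)%N -> 0 <= aent alpha beta T t s.
Proof.
move=> alpha_gt0 beta_gt0 ht hs; rewrite -Hsolve_delta //.
by apply: Hsolve_ge0 => // u _; case: ifP.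
Qed.

Lemma aent_le_Hsolve (alpha beta : R) T t s (f : nat -> R) : 0 < alpha -> 0 < beta ->
  (1 <= t <= T)%N -> (1 <= s <= T)%N ->
  (forall u, (1 <= u <= T)%N -> 0 <= f u) -> 1 <= f s ->
  aent alpha beta T t s <= Hsolve alpha beta T f t.
Proof.
move=> alpha_gt0 beta_gt0 ht hs f_ge0 fs_ge1; rewrite -Hsolve_delta //.
by apply: ler_Hsolve => // u hu; case: eqP => [->|_] //; apply: f_ge0.
Qed.

Lemma sum_mul_pred T (F G : nat -> R) :
  \sum_(1 <= t < T.+1) F t * (if t == 1%N then 0 else G t.-1)
  = \sum_(1 <= t < T.+1) (if (t < T)%N then F t.+1 * G t else 0).
Proof.
case: T => [|T]; first by rewrite !big_geq.
rewrite big_ltn // eqxx mulr0 add0r big_add1 /= [RHS]big_nat_recr //= ltnn addr0.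
apply: eq_big_nat => i /andP[i_ge1 i_lt].
by rewrite ifF ?ifT //; lia.
Qed.

(* Summation by parts: the cross terms vanish because the first-order condition
   H z = theta holds. *)
Lemma cost_decomp (alpha beta : R) T (th z y : nat -> R) : alpha != 0 ->
  (forall t, (1 <= t <= T)%N -> Hseq (beta / alpha) T z t = th t) ->
  cost alpha beta T th y
  = cost alpha beta T th z + cost alpha beta T (fun=> 0) (fun t => y t - z t).
Proof.
move=> alpha_neq0 Hz.
pose F t := beta * (z t - (if t == 1%N then 0 else z t.-1)).
pose G t := y t - z t.
have first_order : \sum_(1 <= t < T.+1) (alpha * (z t - th t) * G t + F t * G t)
    = \sum_(1 <= t < T.+1) F t * (if t == 1%N then 0 else G t.-1).
  rewrite sum_mul_pred; apply: eq_big_nat => t /andP[t_ge1 t_le].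
  rewrite -(Hz t) /Hseq /F; last by lia.
  have -> : (t.+1 == 1%N) = false by lia.
  by case: (t == 1%N); case: (t < T)%N; field.
apply/eqP; rewrite -subr_eq0; apply/eqP.
transitivity (\sum_(1 <= t < T.+1) (alpha * (z t - th t) * G t + F t * G t)
  - \sum_(1 <= t < T.+1) F t * (if t == 1%N then 0 else G t.-1)).
  rewrite /cost opprD addrA -!sumrB; apply: eq_bigr => t _.
  by rewrite /F /G; case: (t == 1%N); field.
by rewrite first_order subrr.
Qed.

Lemma cost_ge_term (alpha beta : R) T (th x : nat -> R) t : 0 <= alpha -> 0 <= beta ->
  (1 <= t <= T)%N -> alpha / 2 * (x t - th t) ^+ 2 <= cost alpha beta T th x.
Proof.
move=> alpha_ge0 beta_ge0 ht.
have term_ge0 (c : R) v : 0 <= c -> 0 <= c / 2 * v ^+ 2.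
  by move=> c_ge0; rewrite mulr_ge0 ?sqr_ge0 ?divr_ge0.
have -> : alpha / 2 * (x t - th t) ^+ 2
          = \sum_(1 <= u < T.+1 | u == t) alpha / 2 * (x u - th u) ^+ 2.
  by rewrite big_nat1_eq ifT //; lia.
rewrite big_mkcond; apply: ler_sum_nat => u _; case: eqP => _.
  by rewrite lerDl term_ge0.
by rewrite addr_ge0 ?term_ge0.
Qed.

(* Hsolve maps the box [-D/2, D/2]^T into itself, so the unconstrained minimiser
   is feasible and hence is the constrained one. *)
Lemma cost_minimizer_eq (alpha beta D : R) T (th x : nat -> R) :
  0 < alpha -> 0 < beta -> 0 < D ->
  (forall u, (1 <= u <= T)%N -> - (D / 2) <= th u <= D / 2) ->
  (forall y, feasible D T y -> cost alpha beta T th x <= cost alpha beta T th y) ->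
  forall t, (1 <= t <= T)%N -> x t = Hsolve alpha beta T th t.
Proof.
move=> alpha_gt0 beta_gt0 D_gt0 th_bound x_opt t ht.
set z := Hsolve alpha beta T th.
have z_feas : feasible D T z by move=> u hu; apply: Hsolve_bound => //; lra.
have := x_opt z z_feas.
rewrite (@cost_decomp _ _ _ _ z x) ?gt_eqF //; last by move=> u hu; apply: Hseq_Hsolve.
rewrite gerDl => gap_le0.
have := cost_ge_term (fun=> 0) (fun u => x u - z u) (ltW alpha_gt0) (ltW beta_gt0) ht.
move/le_trans/(_ gap_le0); rewrite subr0 pmulr_rle0 ?divr_gt0 //.
by rewrite le_eqVlt ltNge sqr_ge0 orbF sqrf_eq0 subr_eq0 => /eqP.
Qed.

End Tridiagonal.

Lemma ltn_divn_pred d n u : (0 < d)%N -> (n = 1 %[mod d])%N -> (1 <= u < n)%N ->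
  (u.-1 %/ d < n.-1 %/ d)%N.
Proof.
move=> d_gt0 n_mod u_range.
have dvd_n1 : (d %| n.-1)%N.
  have : (n.-1 + 1 == 0 + 1 %[mod d])%N by rewrite add0n addn1 prednK ?n_mod //; lia.
  by rewrite eqn_modDr mod0n.
by rewrite ltn_divLR // divnK //; lia.
Qed.

Lemma flip_at_size K k (hk : (k < K)%N) (s : K.-tuple bool) :
  size (set_nth false s k (~~ nth false s k)) == K.
Proof. by rewrite size_set_nth size_tuple (maxn_idPr hk). Qed.

Definition flip_at K k (hk : (k < K)%N) (s : K.-tuple bool) : K.-tuple bool :=
  Tuple (flip_at_size hk s).

Lemma nth_flip_at K k (hk : (k < K)%N) s i :
  nth false (flip_at hk s) i = if i == k then ~~ nth false s k else nth false s i.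
Proof. by rewrite /flip_at /= nth_set_nth. Qed.

Lemma flip_atK K k (hk : (k < K)%N) : involutive (flip_at hk).
Proof.
move=> s; apply: val_inj; apply: (@eq_from_nth _ false) => [|i _].
  by rewrite !size_tuple.
by rewrite !nth_flip_at eqxx negbK; case: eqP => [->|].
Qed.

Section Blocks.
Set Implicit Arguments. Unset Strict Implicit. Unset Printing Implicit Defensive.
Variable R : realType.

Lemma Delta_gt0 (D L : R) T : 0 < D -> 2 * D <= L -> (1 <= T)%N -> (0 < Delta D L T)%N.
Proof.
move=> D_gt0 L_ge T_ge1.
have floor_ge2 : 2 <= Num.floor (L / D) by rewrite floor_ge_int ler_pdivlMr.
have floor_gt0 : 0 < (`|Num.floor (L / D)|%N)%:R :> R.
  by rewrite natr_absz ger0_norm ?(le_trans _ floor_ge2) // ltr0z (lt_le_trans _ floor_ge2).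
rewrite /Delta absz_gt0 ceil_neq0; apply/orP; right.
by rewrite divr_gt0 // ltr0n.
Qed.

Lemma leq_Kblocks_Delta (D L : R) T : (0 < Delta D L T)%N ->
  (T <= Kblocks D L T * Delta D L T)%N.
Proof.
rewrite /Kblocks; set d := Delta D L T => d_gt0.
have d_gt0' : 0 < d%:R :> R by rewrite ltr0n.
have ceil_ge0 : 0 <= Num.ceil ((T%:R : R) / d%:R).
  by rewrite ceil_ge0 (lt_le_trans (ltrN10 R)) ?divr_ge0.
have := ceil_ge ((T%:R : R) / d%:R).
by rewrite -(gez0_abs ceil_ge0) -natr_absz ler_pdivrMr // -natrM ler_nat gez0_abs.
Qed.

Definition block_ind (Dl k u : nat) : R := if (u.-1 %/ Dl == k)%N then 1 else 0.

Lemma theta_flip_at (D : R) Dl K k (hk : (k < K)%N) s u :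
  theta D Dl s u
  = theta D Dl (flip_at hk s) u + (if nth false s k then D else - D) * block_ind Dl k u.
Proof.
rewrite /theta /block_ind nth_flip_at; case: eqP => [->|_]; last by rewrite mulr0 addr0.
by case: (nth false s k) => /=; field.
Qed.

Lemma Esign_ge_pair K (sigma : K.-tuple bool -> K.-tuple bool) (g : K.-tuple bool -> R) m :
  involutive sigma -> (forall s, 2 * m <= g s + g (sigma s)) -> m <= Esign g.
Proof.
move=> sigmaK g_pair.
have sum_sigma : \sum_s g (sigma s) = \sum_s g s.
  by rewrite [RHS](reindex_inj (can_inj sigmaK)).
have : 2 ^+ K * (2 * m) <= \sum_s g s + \sum_s g s.
  rewrite -[X in _ + X]sum_sigma -big_split /=.
  apply: le_trans (ler_sum _ (fun s _ => g_pair s)).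
  by rewrite sumr_const card_tuple card_bool -natrX mulr_natl.
rewrite /Esign ler_pdivlMl ?exprn_gt0 //; lra.
Qed.

Lemma sqr_shift_sum_ge (a c y x z : R) : 0 <= a <= z ->
  (a * c) ^+ 2 / 2 <= (y - (x + c * z)) ^+ 2 + (y - x) ^+ 2.
Proof.
case/andP=> a_ge0 a_le.
have -> : (y - (x + c * z)) ^+ 2 + (y - x) ^+ 2
          = 2 * (y - x - c * z / 2) ^+ 2 + (c * z) ^+ 2 / 2 by field.
have a2_le : a ^+ 2 <= z ^+ 2 by rewrite !expr2 ler_pM.
have ac_le : (a * c) ^+ 2 / 2 <= (c * z) ^+ 2 / 2.
  by rewrite ler_pM2r ?invr_gt0 // !exprMn mulrC ler_wpM2l ?sqr_ge0.
by apply: le_trans ac_le _; rewrite lerDr mulr_ge0 ?sqr_ge0.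
Qed.

End Blocks.

Arguments block_ind {R}.

Theorem lemma6 (R : realType) (alpha beta D L : R) (T W : nat)
  (halpha : 0 < alpha) (hbeta : 0 < beta) (hD : 0 < D) (hT : (1 <= T)%N)
  (hL1 : 2 * D <= L) (hL2 : L <= D * T%:R)
  (Alg : nat -> (nat -> R) -> R)
  (hAlg : online W T Alg)
  (xstar : (Kblocks D L T).-tuple bool -> nat -> R)
  (hxstar : forall s,
     feasible D T (xstar s) /\
     forall y, feasible D T y ->
       cost alpha beta T (theta D (Delta D L T) s) (xstar s)
       <= cost alpha beta T (theta D (Delta D L T) s) y) :
  forall t : nat, (1 <= t)%N -> (t <= T - W)%N ->
    (t + W = 1 %[mod Delta D L T])%N ->
    Esign (fun s => (Alg t (theta D (Delta D L T) s) - xstar s t) ^+ 2)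
    >= aent alpha beta T t (t + W) ^+ 2 * D ^+ 2 / 4.
Proof.
move=> t t_ge1 t_le; move: hxstar.
set Dl := Delta D L T; set K := Kblocks D L T => hxstar t_mod.
have Dl_gt0 : (0 < Dl)%N := Delta_gt0 hD hL1 hT.
have T_le : (T <= K * Dl)%N := leq_Kblocks_Delta Dl_gt0.
set k := ((t + W).-1 %/ Dl)%N; have k_lt : (k < K)%N by rewrite ltn_divLR //; lia.
have xstarE s : xstar s t = Hsolve alpha beta T (theta D Dl s) t.
  apply: (cost_minimizer_eq halpha hbeta hD _ (proj2 (hxstar s))); last by lia.
  by move=> u _; rewrite /theta; case: ifP => _; apply/andP; split; lra.
have a_bounds : 0 <= aent alpha beta T t (t + W) <= Hsolve alpha beta T (block_ind Dl k) t.
  rewrite aent_ge0 ?aent_le_Hsolve //; try lia.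
    by move=> u _; rewrite /block_ind; case: ifP.
  by rewrite /block_ind eqxx.
apply: (Esign_ge_pair (flip_atK k_lt)) => s /=.
(* Block k starts at time t + W, so flipping its sign is invisible to x_t^A. *)
have Alg_flip : Alg t (theta D Dl s) = Alg t (theta D Dl (flip_at k_lt s)).
  apply: hAlg => u u_range; rewrite (theta_flip_at D Dl k_lt) /block_ind.
  by rewrite ltn_eqF ?mulr0 ?addr0 // ltn_divn_pred //; lia.
rewrite Alg_flip !xstarE.
rewrite (eq_Hsolve alpha beta t (fun u _ => theta_flip_at D Dl k_lt s u)) HsolveD.
apply: le_trans (sqr_shift_sum_ge _ _ _ a_bounds).
rewrite exprMn; have -> : (if nth false s k then D else - D) ^+ 2 = D ^+ 2.
  by case: ifP; rewrite ?sqrrN.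
lra.
Qed.
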